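(* Let $m\ge 3$ and let $K\ne\Delta_{[m]}$ be a simplicial complex on $[m]$. If $\mathrm{Bier}(K)$ is a weak suspension but not a suspension, then $\chi(\mathrm{Bier}(K))=m$.
   Context: A simplicial complex $K$ on $[m]=\{1,\dots,m\}$ is a nonempty family of subsets of $[m]$ closed under taking subsets; $V(K)=\{i:\{i\}\in K\}$. $\Delta_{[m]}=2^{[m]}$. Let $[m']=\{1',\dots,m'\}$ be a disjoint copy of $[m]$, $I'=\{i':i\in I\}$. For $K\ne\Delta_{[m]}$ the Alexander dual $K^\vee$ is the complex on $[m']$ with $J'\in K^\vee$ iff $[m]\setminus J\notin K$. The Bier sphere $\mathrm{Bier}(K)$ is the complex on $[m]\sqcup[m']$ with faces $I\sqcup J'$, $I\in K$, $J'\in K^\vee$, $I\cap J=\varnothing$. The chromatic number $\chi(L)$ is the least number of colors in a map $c\colon V(L)\to C$ with $c(u)\ne c(v)$ whenever $\{u,v\}\in L$. A complex $L$ is a weak suspension if there exist distinct $a,b\in V(L)$ with $\{a,b\}\notin L$ such that each of $a,b$ forms an edge of $L$ with every vertex of $V(L)\setminus\{a,b\}$. $L$ (on vertex set $W$) is a suspension if there exist distinct $v,w\in W$ with $L=\{\varnothing,\{v\},\{w\}\}*\bigl(L\cap 2^{W\setminus\{v,w\}}\bigr)$, where $*$ denotes the join $K_1*K_2=\{\sigma_1\sqcup\sigma_2:\sigma_j\in K_j\}$. *)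

From mathcomp Require Import all_boot.
Set Implicit Arguments. Unset Strict Implicit. Unset Printing Implicit Defensive.

Definition simplicial_complex (T : finType) (K : {set {set T}}) : Prop :=
  K != set0 /\ forall A B : {set T}, A \in K -> B \subset A -> B \in K.

Definition full_simplex (T : finType) : {set {set T}} := powerset [set: T].

Definition vertices (T : finType) (L : {set {set T}}) : {set T} :=
  [set x | [set x] \in L].

(* Alexander dual on the primed copy [m'] (modelled again by 'I_m):
   J' \in K^vee iff [m] \ J \notin K. *)
Definition alexander_dual (m : nat) (K : {set {set 'I_m}}) : {set {set 'I_m}} :=
  [set J : {set 'I_m} | ~: J \notin K].

(* Bier sphere on [m] \sqcup [m'] = 'I_m + 'I_m (inl i = i, inr i = i'):
   faces I \sqcup J' with I \in K, J' \in K^vee, I \cap J = \emptyset. *)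
Definition bier (m : nat) (K : {set {set 'I_m}}) : {set {set ('I_m + 'I_m)%type}} :=
  [set S : {set ('I_m + 'I_m)%type} |
     [&& [set i | inl i \in S] \in K,
         [set j | inr j \in S] \in alexander_dual K &
         [disjoint [set i | inl i \in S] & [set j | inr j \in S]]]].

Definition proper_coloring (T : finType) (L : {set {set T}}) (k : nat)
    (c : T -> nat) : Prop :=
  (forall x, x \in vertices L -> c x < k) /\
  (forall u v, u != v -> [set u; v] \in L -> c u != c v).

Definition colorable (T : finType) (L : {set {set T}}) (k : nat) : Prop :=
  exists c : T -> nat, proper_coloring L k c.

Definition chromatic_number_is (T : finType) (L : {set {set T}}) (k : nat) : Prop :=
  colorable L k /\ forall j, colorable L j -> k <= j.

Definition weak_suspension (T : finType) (L : {set {set T}}) : Prop :=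
  exists a b : T, [/\ a \in vertices L, b \in vertices L, a != b,
    [set a; b] \notin L &
    forall v, v \in vertices L -> v != a -> v != b ->
      [set a; v] \in L /\ [set b; v] \in L].

(* L = {emptyset,{v},{w}} * (L \cap 2^{W \ {v,w}}) (the join). *)
Definition suspension (T : finType) (L : {set {set T}}) : Prop :=
  exists v w : T, v != w /\
    forall S : {set T}, S \in L <->
      exists2 A : {set T}, (A \in L /\ v \notin A /\ w \notin A) &
        (S = A \/ S = v |: A \/ S = w |: A).

From mathcomp Require Import all_boot zify.
Set Implicit Arguments. Unset Strict Implicit. Unset Printing Implicit Defensive.

(* Colouring [i] and [i'] alike is proper, as no face of Bier(K) contains both,
   so m colours suffice. Bier(K) is pure with facets of m - 1 vertices, and every
   ridge lies in at least two facets. With fewer than m colours every facet uses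
   all colours, so a facet missing both a and b would contain a vertex coloured
   like a and adjacent to it; hence every facet meets {a, b}. Exchanging vertices
   across ridges then shows that every face missing a and b is coned off by both,
   i.e. Bier(K) is the suspension over {a, b}. *)

Lemma card_lt_inj_avoid (T : finType) (S : {set T}) (f : T -> nat) (n k : nat) :
  {in S &, injective f} -> {in S, forall x, f x < n} -> k < n ->
  {in S, forall x, f x != k} -> #|S| < n.
Proof.
move=> f_inj f_lt k_lt f_neq.
have : #|S| <= size (rem k (iota 0 n)).
  rewrite cardE -(size_map f); apply: uniq_leq_size.
    by rewrite map_inj_in_uniq ?enum_uniq // => x y; rewrite !mem_enum; apply: f_inj.
  move=> y /mapP[x]; rewrite mem_enum => Sx ->.
  by rewrite (mem_rem_uniq _ (iota_uniq 0 n)) !inE f_neq //= mem_iota f_lt.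
by rewrite size_rem ?size_iota ?mem_iota //; lia.
Qed.

Lemma maximal_face_below (T : finType) (K : {set {set T}}) (I U : {set T}) :
  I \in K -> I \subset U -> U \notin K ->
  exists (I' : {set T}) (x : T),
    [/\ I \subset I', I' \subset U, I' \in K, x \in U :\: I' & x |: I' \notin K].
Proof.
move=> KI sIU KU.
pose P X := [&& X \in K, I \subset X & X \subset U].
have PI : exists X, P X by exists I; rewrite /P KI subxx.
have [I' /maxsetP[/and3P[KI' sII' sI'U] maxI']] := ex_maxset PI.
have [x /setDP[Ux I'x]] : exists x, x \in U :\: I'.
  apply/set0Pn; rewrite setD_eq0; apply: contraNN KU => sUI'.
  by have -> : U = I' by apply/eqP; rewrite eqEsubset sUI'.
exists I', x; split; rewrite ?inE ?I'x ?Ux //.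
apply: contraNN I'x => KxI'.
have PxI' : P (x |: I').
  by rewrite /P KxI' (subset_trans sII' (subsetUr _ _)) subUset sub1set Ux.
by rewrite -(maxI' _ PxI' (subsetUr _ _)) setU11.
Qed.

Section SimplicialComplex.
Variables (T : finType) (L : {set {set T}}).
Hypothesis HL : simplicial_complex L.

Lemma face_subset (F S : {set T}) : F \in L -> S \subset F -> S \in L.
Proof. by case: HL => _; apply. Qed.

Lemma face_vertex (F : {set T}) x : F \in L -> x \in F -> x \in vertices L.
Proof. by move=> LF Fx; rewrite inE (face_subset LF) ?sub1set. Qed.

Lemma face_edge (F : {set T}) x y : F \in L -> x \in F -> y \in F -> [set x; y] \in L.
Proof. by move=> LF Fx Fy; rewrite (face_subset LF) // subUset !sub1set Fx. Qed.

Lemma proper_coloring_face_surj k c (F : {set T}) v :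
  proper_coloring L k c -> F \in L -> k <= #|F| -> v \in vertices L ->
  exists2 x, x \in F & c x = c v.
Proof.
move=> [c_lt c_edge] LF kF Lv.
case: (pickP [pred x in F | c x == c v]) => [x /andP[Fx /eqP] | none]; first by exists x.
suff : #|F| < k by rewrite ltnNge kF.
apply: (card_lt_inj_avoid (f := c) (k := c v)); last 2 first.
- exact: c_lt.
- by move=> x Fx; have := none x; rewrite /= Fx => /negbT.
- move=> x y Fx Fy; apply: contra_eq => xy.
  exact: c_edge xy (face_edge LF Fx Fy).
- by move=> x Fx; apply/c_lt/(face_vertex LF).
Qed.

Lemma large_face_meets_pair k c a b (G : {set T}) :
  proper_coloring L k c -> a \in vertices L ->
  (forall v, v \in vertices L -> v != a -> v != b -> [set a; v] \in L) ->
  G \in L -> k <= #|G| -> (a \in G) || (b \in G).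
Proof.
move=> col La a_adj LG kG; apply/norP => -[aG bG].
have [x Gx cxa] := proper_coloring_face_surj col LG kG La.
have xa : x != a by apply: contraNneq aG => <-.
have xb : x != b by apply: contraNneq bG => <-.
have ax : [set a; x] \in L by rewrite a_adj // (face_vertex LG Gx).
by move: (col.2 a x); rewrite eq_sym xa cxa eqxx => /(_ isT ax).
Qed.

Lemma suspension_of_cones v w : v != w -> [set v; w] \notin L ->
  (forall A, A \in L -> v \notin A -> w \notin A -> v |: A \in L /\ w |: A \in L) ->
  suspension L.
Proof.
move=> vw Lvw cones; exists v, w; split=> // S; split=> [LS|[A [LA [vA wA]] [->|[->|->]]]].
- have [vS|vS] := boolP (v \in S); last have [wS|wS] := boolP (w \in S).
  + have wS : w \notin S by apply: contraNN Lvw; apply: face_edge.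
    exists (S :\ v); last by right; left; rewrite setD1K.
    by rewrite (face_subset LS) ?subD1set // !inE eqxx (negbTE wS) andbF.
  + exists (S :\ w); last by right; right; rewrite setD1K.
    by rewrite (face_subset LS) ?subD1set // !inE eqxx (negbTE vS) andbF.
  + by exists S; [split | left].
- by [].
- by case: (cones A LA vA wA).
- by case: (cones A LA vA wA).
Qed.
End SimplicialComplex.

Section PureComplex.
Variables (T : finType) (L : {set {set T}}) (n : nat).
Hypothesis HL : simplicial_complex L.
Hypothesis L_pure :
  forall S, S \in L -> exists F : {set T}, [/\ S \subset F, F \in L & #|F| = n].
Hypothesis L_ridge : forall (R : {set T}) (b : T), R \in L -> #|R|.+1 = n ->
  exists x : T, [/\ x \notin R, x != b & x |: R \in L].

Lemma cones_of_facets_meet (y z : T) :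
  (forall F : {set T}, F \in L -> #|F| = n -> (y \in F) || (z \in F)) ->
  forall A : {set T}, A \in L -> y \notin A -> z \notin A ->
    y |: A \in L /\ z |: A \in L.
Proof.
suff cone (y' z' : T) :
    (forall F : {set T}, F \in L -> #|F| = n -> (y' \in F) || (z' \in F)) ->
    forall A : {set T}, A \in L -> y' \notin A -> z' \notin A -> z' |: A \in L.
  move=> cover A LA yA zA; split; last exact: (cone y z).
  by apply: (cone z y) => // F LF nF; rewrite orbC cover.
move=> cover A LA yA zA; apply: contraT => LzA.
(* A facet through A contains y' but not z'; crossing the ridge F :\ y' yields a
   facet avoiding both, unless the crossing adds z', which puts z' |: A in L. *)
have [F [sAF LF nF]] := L_pure LA.
have zF : z' \notin F.
  by apply: contraNN LzA => zF; rewrite (face_subset HL LF) // subUset sub1set zF.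
have yF : y' \in F by move: (cover F LF nF); rewrite (negbTE zF) orbF.
have LR : F :\ y' \in L := face_subset HL LF (subD1set F y').
have nR : #|F :\ y'|.+1 = n by rewrite -nF (cardsD1 y' F) yF.
have [x [Rx xy LxR]] := L_ridge y' LR nR.
have [xz|xz] := eqVneq x z'.
- case/negP: LzA; apply: (face_subset HL LxR); rewrite -xz setUS //.
  apply/subsetP => w Aw; rewrite !inE (subsetP sAF) // andbT.
  by apply: contraNneq yA => <-.
- have := cover _ LxR; rewrite cardsU1 Rx add1n nR => /(_ erefl).
  rewrite !inE eqxx (negbTE zF) andbF orbF.
  by rewrite [y' == x]eq_sym (negbTE xy) [z' == x]eq_sym (negbTE xz).
Qed.
End PureComplex.

Section SumSets.
Variables A B : finType.

Definition lpart (S : {set A + B}) : {set A} := [set a | inl a \in S].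
Definition rpart (S : {set A + B}) : {set B} := [set b | inr b \in S].
Definition sumset (I : {set A}) (J : {set B}) : {set A + B} := inl @: I :|: inr @: J.

Lemma mem_sumset (I : {set A}) (J : {set B}) x :
  (x \in sumset I J) = (match x with inl a => a \in I | inr b => b \in J end).
Proof.
have inl_inj : injective (@inl A B) by move=> ? ? [].
have inr_inj : injective (@inr A B) by move=> ? ? [].
case: x => [a|b]; rewrite inE.
- have /negbTE -> : inl a \notin inr @: J by apply/imsetP => -[].
  by rewrite mem_imset // orbF.
- have /negbTE -> : inr b \notin inl @: I by apply/imsetP => -[].
  by rewrite mem_imset.
Qed.

Lemma lpart_sumset (I : {set A}) (J : {set B}) : lpart (sumset I J) = I.
Proof. by apply/setP => a; rewrite inE mem_sumset. Qed.

Lemma rpart_sumset (I : {set A}) (J : {set B}) : rpart (sumset I J) = J.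
Proof. by apply/setP => b; rewrite inE mem_sumset. Qed.

Lemma sumset_parts (S : {set A + B}) : sumset (lpart S) (rpart S) = S.
Proof. by apply/setP => -[a|b]; rewrite mem_sumset inE. Qed.

Lemma card_sumset (I : {set A}) (J : {set B}) : #|sumset I J| = #|I| + #|J|.
Proof.
rewrite cardsU !card_imset; try by move=> ? ? [].
suff -> : inl @: I :&: inr @: J = set0 by rewrite cards0 subn0.
by apply/setP => x; rewrite !inE; apply/negP => /andP[/imsetP[? _ ->] /imsetP[]].
Qed.

Lemma card_parts (S : {set A + B}) : #|S| = #|lpart S| + #|rpart S|.
Proof. by rewrite -card_sumset sumset_parts. Qed.

Lemma lpart_inlU (a : A) (S : {set A + B}) : lpart (inl a |: S) = a |: lpart S.
Proof. by apply/setP => a'; rewrite !inE. Qed.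

Lemma rpart_inlU (a : A) (S : {set A + B}) : rpart (inl a |: S) = rpart S.
Proof. by apply/setP => b'; rewrite !inE. Qed.

Lemma lpart_inrU (b : B) (S : {set A + B}) : lpart (inr b |: S) = lpart S.
Proof. by apply/setP => a'; rewrite !inE. Qed.

Lemma rpart_inrU (b : B) (S : {set A + B}) : rpart (inr b |: S) = b |: rpart S.
Proof. by apply/setP => b'; rewrite !inE. Qed.

Lemma lpart_subset (S S' : {set A + B}) : S' \subset S -> lpart S' \subset lpart S.
Proof. by move=> sS'S; apply/subsetP => a; rewrite !inE => /(subsetP sS'S). Qed.

Lemma rpart_subset (S S' : {set A + B}) : S' \subset S -> rpart S' \subset rpart S.
Proof. by move=> sS'S; apply/subsetP => b; rewrite !inE => /(subsetP sS'S). Qed.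
End SumSets.

Section Bier.
Variables (m : nat) (K : {set {set 'I_m}}).
Hypothesis HK : simplicial_complex K.

Lemma in_bier (S : {set 'I_m + 'I_m}) : (S \in bier K) =
  [&& lpart S \in K, ~: rpart S \notin K & [disjoint lpart S & rpart S]].
Proof. by rewrite !inE. Qed.

Lemma bier_simplicial_complex :
  K != full_simplex 'I_m -> simplicial_complex (bier K).
Proof.
case: HK => /set0Pn[A KA] K_closed KnT; split.
- apply/set0Pn; exists set0.
  have lpart0 : lpart (set0 : {set 'I_m + 'I_m}) = set0 by apply/setP => i; rewrite !inE.
  have rpart0 : rpart (set0 : {set 'I_m + 'I_m}) = set0 by apply/setP => i; rewrite !inE.
  rewrite in_bier lpart0 rpart0 setC0 disjoints_subset sub0set.
  rewrite (K_closed A) ?sub0set //= andbT.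
  apply: contra KnT => KT; apply/eqP/setP => X.
  by rewrite powersetE subsetT; apply: K_closed KT (subsetT X).
- move=> S S'; rewrite !in_bier => /and3P[KS KcS dS] sS'S.
  have [sl sr] := (lpart_subset sS'S, rpart_subset sS'S).
  rewrite (K_closed _ _ KS sl) (disjointWl sl (disjointWr sr dS)) andbT /=.
  by apply: contra KcS => KcS'; apply: K_closed KcS' _; rewrite setCS.
Qed.

Lemma bier_pure (S : {set 'I_m + 'I_m}) : S \in bier K ->
  exists F : {set 'I_m + 'I_m}, [/\ S \subset F, F \in bier K & #|F| = m.-1].
Proof.
rewrite in_bier => /and3P[KI KU dIJ].
have sIU : lpart S \subset ~: rpart S by rewrite -disjoints_subset.
have [I [x [sI sIU' KI' /setDP[Ux Ix] KxI]]] := maximal_face_below KI sIU KU.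
exists (sumset I (~: (x |: I))); split.
- apply/subsetP => -[i|i] Si; rewrite mem_sumset.
  + by apply: (subsetP sI); rewrite inE.
  + have Ji : i \in rpart S by rewrite inE.
    rewrite !inE negb_or; apply/andP; split.
    * by apply: contraTneq Ux => <-; rewrite inE Ji.
    * by apply: contraTN Ji => /(subsetP sIU'); rewrite inE.
- rewrite in_bier lpart_sumset rpart_sumset setCK KI' KxI.
  by rewrite disjoints_subset setCK subsetUr.
- have := cardsC (x |: I); rewrite card_sumset cardsU1 Ix card_ord; lia.
Qed.

Lemma bier_extend (R : {set 'I_m + 'I_m}) (u v : 'I_m) :
  R \in bier K -> u != v -> u \notin lpart R -> u \notin rpart R ->
  v \notin lpart R -> v \notin rpart R ->
  (inl u |: R \in bier K) || (inr v |: R \in bier K).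
Proof.
rewrite !in_bier lpart_inlU rpart_inlU lpart_inrU rpart_inrU.
move=> /and3P[KR KcR dR] uv uL uR vL vR.
have [KuR|KuR] /= := boolP (u |: lpart R \in K).
  by rewrite KcR disjoints_subset subUset sub1set inE uR -disjoints_subset dR.
rewrite KR /=; apply/andP; split; last first.
  rewrite disjoint_sym disjoints_subset subUset sub1set inE vL.
  by rewrite -disjoints_subset disjoint_sym.
apply: contra KuR => KcvR; case: HK => _ K_closed; apply: K_closed KcvR _.
rewrite subUset sub1set in_setC in_setU1 negb_or uv uR /=.
apply/subsetP => i Li; rewrite in_setC in_setU1 negb_or (disjointFr dR Li) andbT.
by apply: contraTneq Li => ->.
Qed.

Lemma bier_ridge (R : {set 'I_m + 'I_m}) (b : 'I_m + 'I_m) :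
  R \in bier K -> #|R|.+1 = m.-1 ->
  exists x, [/\ x \notin R, x != b & x |: R \in bier K].
Proof.
(* R misses exactly two indices p, q; each of the pairs {inl p, inr q} and
   {inl q, inr p} contains a vertex extending R, and the two pairs are disjoint. *)
move=> LR nR.
have dR : [disjoint lpart R & rpart R] by move: LR; rewrite in_bier => /and3P[].
have /cards2P[p [q [pq Epq]]] : #|~: (lpart R :|: rpart R)| == 2.
  have := cardsC (lpart R :|: rpart R).
  rewrite cardsU (disjoint_setI0 dR) cards0 subn0 card_ord => E.
  by apply/eqP; move: nR; rewrite card_parts; lia.
have missing i : i \in [set p; q] -> i \notin lpart R /\ i \notin rpart R.
  by rewrite -Epq !in_setC in_setU => /norP.
have ext u v : u != v -> u \in [set p; q] -> v \in [set p; q] ->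
    exists2 x, x \in [set inl u; inr v] & (x \notin R) && (x |: R \in bier K).
  move=> uv /missing[uL uR] /missing[vL vR].
  case/orP: (bier_extend LR uv uL uR vL vR) => Lx.
  - exists (inl u); first by rewrite !inE eqxx.
    by rewrite Lx andbT; move: uL; rewrite inE.
  - exists (inr v); first by rewrite !inE eqxx orbT.
    by rewrite Lx andbT; move: vR; rewrite inE.
have [p_pq q_pq] : p \in [set p; q] /\ q \in [set p; q] by rewrite !inE !eqxx orbT.
have [x1 Px1 /andP[Rx1 Lx1]] := ext p q pq p_pq q_pq.
have qp : q != p by rewrite eq_sym.
have [x2 Px2 /andP[Rx2 Lx2]] := ext q p qp q_pq p_pq.
have x12 : x1 != x2.
  by move: Px1 Px2; rewrite !inE => /orP[]/eqP-> /orP[]/eqP->.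
have [x1b|x1b] := eqVneq x1 b; last by exists x1.
by exists x2; rewrite -x1b eq_sym.
Qed.

Lemma bier_colorable : colorable (bier K) m.
Proof.
exists (fun x => match x with inl i | inr i => val i end).
split=> [[] i _ | u v uv]; [exact: ltn_ord | exact: ltn_ord |].
rewrite in_bier => /and3P[_ _ d].
case: u v uv d => i [] j uv d; apply: contraNneq uv => /val_inj ij; subst j => //.
all: move: d; rewrite disjoints_subset => /subsetP/(_ i).
all: by rewrite !inE !eqxx ?orbT => /(_ isT).
Qed.
End Bier.

Theorem mainTheorem9 (m : nat) (K : {set {set 'I_m}}) :
  3 <= m ->
  simplicial_complex K ->
  K != full_simplex 'I_m ->
  weak_suspension (bier K) ->
  ~ suspension (bier K) ->
  chromatic_number_is (bier K) m.
Proof.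
move=> _ HK KnT [a [b [La _ ab Lab a_adj]]] not_susp.
have HL := bier_simplicial_complex HK KnT.
split=> [|k [c col]]; first exact: bier_colorable.
rewrite leqNgt; apply/negP => km; apply: not_susp.
have cover (F : {set 'I_m + 'I_m}) :
    F \in bier K -> #|F| = m.-1 -> (a \in F) || (b \in F).
  move=> LF nF; apply: (large_face_meets_pair HL col La _ LF); last by lia.
  by move=> v Lv va vb; case: (a_adj v Lv va vb).
apply: (suspension_of_cones HL ab Lab).
exact: (cones_of_facets_meet HL (@bier_pure m K) (bier_ridge HK) cover).
Qed.
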